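(* Let $P$ be a polyhedron (a polyhedral map of genus 0) and $T$ the truncation operation. Then $\mathrm{Aut}(P)=\mathrm{Aut}(T(P))$, in the sense that every automorphism of $T(P)$ is induced by an automorphism of $P$; in particular $|\mathrm{Aut}(T(P))|=|\mathrm{Aut}(P)|$.
   Context: A polyhedral map is a 3-connected graph embedded in a closed orientable surface such that every face is an open disc and the closures of any two faces have connected intersection; $\mathrm{Aut}(P)$ denotes its automorphism group. The truncation $T(P)$ of $P$ is the map obtained by ''cutting off'' every vertex: $T(P)$ has one vertex $(v,e)$ for every pair of a vertex $v$ and an incident edge $e$ of $P$; for each edge $e=vw$ of $P$ the vertices $(v,e)$ and $(w,e)$ are adjacent, and for each vertex $v$ the vertices $(v,e)$, $(v,e')$ are adjacent whenever $e,e'$ are consecutive in the rotation around $v$. Thus each vertex $v$ of degree $d$ is replaced by a face of size $d$ and each face of size $k$ of $P$ becomes a face of size $2k$. Every automorphism of $P$ induces an automorphism of $T(P)$ in the obvious way. *)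

(* Maps on closed surfaces encoded by flags (the standard
   "flag graph" / monodromy encoding of combinatorial maps). *)
From mathcomp Require Import all_boot all_fingroup.

Set Implicit Arguments.
Unset Strict Implicit.
Unset Printing Implicit Defensive.

(* A flag system: three involutions r0 (change vertex), r1 (change edge),
   r2 (change face) on a finite set of flags. *)
Record fmap (F : finType) := FMap { r0 : F -> F; r1 : F -> F; r2 : F -> F }.

Section MapDefs.
Variable F : finType.
Implicit Types (m : fmap F) (x y : F).

Definition flag_rel m : rel F :=
  fun x y => [|| y == r0 m x, y == r1 m x | y == r2 m x].

Definition is_map m : Prop :=
  (forall x, r0 m (r0 m x) = x) /\ (forall x, r1 m (r1 m x) = x) /\
  (forall x, r2 m (r2 m x) = x) /\
  (forall x, r0 m x != x) /\ (forall x, r1 m x != x) /\ (forall x, r2 m x != x) /\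
  (forall x, r0 m (r2 m x) = r2 m (r0 m x)) /\ (forall x, r0 m (r2 m x) != x) /\
  (forall x y, connect (flag_rel m) x y).

Definition vrel m : rel F := fun x y => (y == r1 m x) || (y == r2 m x).
Definition erel m : rel F := fun x y => (y == r0 m x) || (y == r2 m x).
Definition facerel m : rel F := fun x y => (y == r0 m x) || (y == r1 m x).

Definition vclass m x : {set F} := [set y | connect (vrel m) x y].
Definition eclass m x : {set F} := [set y | connect (erel m) x y].
Definition fclass m x : {set F} := [set y | connect (facerel m) x y].

Definition Vset m : {set {set F}} := [set vclass m x | x in F].
Definition Eset m : {set {set F}} := [set eclass m x | x in F].
Definition Fset m : {set {set F}} := [set fclass m x | x in F].

(* incidence = sharing a flag *)
Definition meets (A B : {set F}) : bool := ~~ [disjoint A & B].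

Definition adj m : rel {set F} :=
  fun A B => [&& A \in Vset m, B \in Vset m, A != B &
                 [exists x, (x \in A) && (r0 m x \in B)]].

Definition simple_graph m : Prop :=
  (forall x, vclass m x != vclass m (r0 m x)) /\
  (forall x y, vclass m x = vclass m y -> vclass m (r0 m x) = vclass m (r0 m y) ->
               eclass m x = eclass m y).

Definition three_connected m : Prop :=
  4 <= #|Vset m| /\
  forall S : {set {set F}}, S \subset Vset m -> #|S| <= 2 ->
    forall A B, A \in Vset m :\: S -> B \in Vset m :\: S ->
      connect [rel C D | adj m C D && (C \notin S) && (D \notin S)] A B.

(* closures of two distinct faces f, g have connected intersection: the common
   boundary vertices are connected through common boundary edges *)
Definition common_adj m (f g : {set F}) : rel {set F} :=
  fun A B => [exists x, [&& x \in A, r0 m x \in B,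
                            meets (eclass m x) f & meets (eclass m x) g]].

Definition faces_meet_well m : Prop :=
  forall f g, f \in Fset m -> g \in Fset m -> f != g ->
    forall A B, A \in Vset m -> B \in Vset m ->
      meets A f -> meets A g -> meets B f -> meets B g ->
      connect (common_adj m f g) A B.

Definition polyhedral m : Prop :=
  simple_graph m /\ three_connected m /\ faces_meet_well m.

Definition orientable m : Prop :=
  exists c : F -> bool, forall x,
    [/\ c (r0 m x) = ~~ c x, c (r1 m x) = ~~ c x & c (r2 m x) = ~~ c x].

Definition genus0 m : Prop :=
  orientable m /\ #|Vset m| + #|Fset m| = #|Eset m| + 2.

Definition is_autb m (g : F -> F) : bool :=
  [forall x, [&& g (r0 m x) == r0 m (g x), g (r1 m x) == r1 m (g x)
               & g (r2 m x) == r2 m (g x)]].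

Definition aut_set m : {set {perm F}} := [set g : {perm F} | is_autb m g].

End MapDefs.

(* Each flag (v,e,f) of P gives three flags of T(P):
   (x,0): T-vertex (v,e), the T-edge coming from e, face from f;
   (x,1): T-vertex (v,e), the corner T-edge inside f, face from f;
   (x,2): T-vertex (v,e), the corner T-edge inside f, the face replacing v. *)
Definition i0 : 'I_3 := @Ordinal 3 0 isT.
Definition i1 : 'I_3 := @Ordinal 3 1 isT.
Definition i2 : 'I_3 := @Ordinal 3 2 isT.

Definition tr0 (F : finType) (m : fmap F) (p : F * 'I_3) : F * 'I_3 :=
  let: (x, i) := p in if val i == 0 then (r0 m x, i) else (r1 m x, i).
Definition tr1 (F : finType) (m : fmap F) (p : F * 'I_3) : F * 'I_3 :=
  let: (x, i) := p in
  if val i == 0 then (x, i1) else if val i == 1 then (x, i0) else (r2 m x, i).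
Definition tr2 (F : finType) (m : fmap F) (p : F * 'I_3) : F * 'I_3 :=
  let: (x, i) := p in
  if val i == 0 then (r2 m x, i) else if val i == 1 then (x, i2) else (x, i1).

Definition trunc (F : finType) (m : fmap F) : fmap (F * 'I_3)%type :=
  FMap (tr0 m) (tr1 m) (tr2 m).

From mathcomp Require Import all_boot all_fingroup zify.

Set Implicit Arguments.
Unset Strict Implicit.
Unset Printing Implicit Defensive.

(* An automorphism h of T(P) permutes its faces, which are the vertex faces
   (those replacing the vertices of P) and the enlarged faces of P.  Every
   vertex of T(P) lies on exactly one vertex face, so whether h maps the
   vertex face of v to a vertex face does not change along the flag graph of
   P, hence does not depend on v.  If it never does, the set B of faces of P
   sent to vertex faces has V elements and every edge of P separates a face
   in B from a face outside B.  Faces of P have at least three sides (a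
   monogon would give a loop, a digon a multiple edge unless P is tiny or
   non-orientable), so counting flags gives F + V <= E, against Euler's
   formula V + F = E + 2.  Hence h preserves vertex faces, and it then acts
   on the flags (x, i) of T(P) as (g x, i) for an automorphism g of P. *)

Lemma connect_homo_in (T U : finType) (e : rel T) (e' : rel U) (f : T -> U)
    (I : pred T) :
  (forall x y, I x -> e x y -> I y /\ connect e' (f x) (f y)) ->
  forall x y, I x -> connect e x y -> connect e' (f x) (f y).
Proof.
move=> fe x y + /connectP[p]; elim: p x => [|z p IHp] x Ix /=; first by move=> _ ->.
case/andP=> /(fe _ _ Ix)[Iz xz] /IHp + y_last; move=> /(_ Iz y_last).
exact: connect_trans.
Qed.

Lemma eq_connect_class (T : finType) (e : rel T) : symmetric e -> forall a b,
  ([set y | connect e a y] == [set y | connect e b y]) = connect e a b.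
Proof.
move=> /sym_connect_sym e_sym a b; apply/eqP/idP => [eq_ab|ab].
  have: b \in [set y | connect e b y] by rewrite inE.
  by rewrite -eq_ab inE.
by apply/setP => y; rewrite !inE (same_connect e_sym ab).
Qed.

Lemma card_imset_kernel (T U W : finType) (A : {pred T}) (f : T -> U) (g : T -> W) :
  {in A &, forall x y, (f x == f y) = (g x == g y)} -> #|f @: A| = #|g @: A|.
Proof.
move=> fg; set fgA := [set (f x, g x) | x in A].
have -> : f @: A = fst @: fgA by rewrite -imset_comp.
have -> : g @: A = snd @: fgA by rewrite -imset_comp.
rewrite [LHS]card_in_imset => [|_ _ /imsetP[x xA ->] /imsetP[y yA ->] /= eq_xy].
  rewrite [RHS]card_in_imset // => _ _ /imsetP[x xA ->] /imsetP[y yA ->] /= eq_xy.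
  by congr pair => //; apply/eqP; rewrite fg // eq_xy.
by congr pair => //; apply/eqP; rewrite -fg // eq_xy.
Qed.

Lemma card_closed_classes (T : finType) (e : rel T) (A : {pred T}) :
  symmetric e -> closed e A ->
  #|A| = \sum_(C in [set [set y | connect e x y] | x in A]) #|C|.
Proof.
move=> e_sym A_closed; rewrite -sum1_card.
rewrite (partition_big_imset (fun x => [set y | connect e x y])) /=.
apply: eq_bigr => _ /imsetP[x xA ->]; rewrite sum1dep_card; apply: eq_card => y.
rewrite !inE eq_connect_class // (sym_connect_sym e_sym) andb_idl // => xy.
by rewrite -(closed_connect A_closed xy).
Qed.

Lemma card_classes_split (T : finType) (e : rel T) (A : {set T}) :
  symmetric e -> closed e A ->
  #|[set [set y | connect e x y] | x in T]| =
  #|[set [set y | connect e x y] | x in A]| + #|[set [set y | connect e x y] | x in ~: A]|.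
Proof.
move=> e_sym A_closed; set cls := fun x => [set y | connect e x y].
have -> : cls @: T = cls @: (A :|: ~: A).
  by rewrite setUCr; apply/setP=> C; apply/imsetP/imsetP=> -[x _ ->]; exists x.
rewrite imsetU cardsU; suff -> : (cls @: A) :&: (cls @: ~: A) = set0 by rewrite cards0 subn0.
apply/setP=> C; rewrite !inE; apply/negbTE/andP=> -[/imsetP[x xA ->] /imsetP[y yNA]].
move/eqP; rewrite eq_connect_class // => /(closed_connect A_closed).
by rewrite inE in yNA; rewrite xA (negbTE yNA).
Qed.

Lemma ord3P (i : 'I_3) : [\/ i = i0, i = i1 | i = i2].
Proof.
by case: i => -[|[|[|//]]] lt_i; [constructor 1|constructor 2|constructor 3]; apply: val_inj.
Qed.

Lemma neq_eqF (T : eqType) (u v : T) :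
  u != v -> ((u == v) = false) * ((v == u) = false).
Proof. by move=> /negbTE uv; split; rewrite // eq_sym. Qed.

Lemma dihedral_orbit_uniq (T : eqType) (a b : T -> T) :
  involutive a -> involutive b -> (forall x, a x != x) -> (forall x, b x != x) ->
  (forall x, a x != b x) -> (forall x, a (b x) != b (a x)) ->
  forall x, uniq [:: x; a x; b x; a (b x); b (a x); a (b (a x))].
Proof.
move=> aK bK a_neq b_neq ab_neq abba_neq x.
have E y := (neq_eqF (a_neq y), neq_eqF (b_neq y), neq_eqF (ab_neq y),
             neq_eqF (abba_neq y)).
rewrite /= !inE !negb_or !(inj_eq (can_inj aK), inj_eq (can_inj bK)) ?E.
by rewrite -!(inv_eq aK) ?E -(inv_eq bK) ?E.
Qed.

Lemma klein_orbit_uniq (T : eqType) (a b : T -> T) :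
  involutive a -> (forall x, a x != x) -> (forall x, b x != x) ->
  (forall x, a (b x) != x) -> forall x, uniq [:: x; a x; b x; a (b x)].
Proof.
move=> aK a_neq b_neq ab_neq x.
have E y := (neq_eqF (a_neq y), neq_eqF (b_neq y), neq_eqF (ab_neq y)).
rewrite /= !inE !negb_or !(inj_eq (can_inj aK)) ?E.
by rewrite (inv_eq aK) E.
Qed.

Lemma aut_setP (F : finType) (Q : fmap F) (g : {perm F}) :
  reflect [/\ forall x, g (r0 Q x) = r0 Q (g x), forall x, g (r1 Q x) = r1 Q (g x)
            & forall x, g (r2 Q x) = r2 Q (g x)]
          (g \in aut_set Q).
Proof.
rewrite inE; apply: (iffP forallP) => [gQ | [g0 g1 g2] x].
  by split=> x; have /and3P[/eqP ? /eqP ? /eqP ?] := gQ x.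
by rewrite g0 g1 g2 !eqxx.
Qed.

Lemma aut_setV (F : finType) (Q : fmap F) (g : {perm F}) :
  g \in aut_set Q -> g^-1%g \in aut_set Q.
Proof.
case/aut_setP=> g0 g1 g2; apply/aut_setP.
by split=> x; apply: (@perm_inj _ g); rewrite ?g0 ?g1 ?g2 !permKV.
Qed.

Lemma aut_connect_facerel (F : finType) (Q : fmap F) (g : {perm F}) :
  g \in aut_set Q ->
  forall a b, connect (facerel Q) (g a) (g b) = connect (facerel Q) a b.
Proof.
have homo k : k \in aut_set Q ->
    forall a b, connect (facerel Q) a b -> connect (facerel Q) (k a) (k b).
  case/aut_setP=> k0 k1 _ a b; apply: (connect_homo_in (I := predT)) => // u v _.
  by case/orP=> /eqP->; split=> //; apply: connect1; rewrite /facerel ?k0 ?k1 eqxx ?orbT.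
move=> gQ a b; apply/idP/idP; last exact: homo.
by move/(homo _ (aut_setV gQ)); rewrite !permK.
Qed.

Lemma card_fclass_aut (F I : finType) (Q : fmap F) (g : {perm F}) (k : I -> F)
    (A : {pred I}) :
  symmetric (facerel Q) -> g \in aut_set Q ->
  #|[set fclass Q (g (k x)) | x in A]| = #|[set fclass Q (k x) | x in A]|.
Proof.
move=> symQ gQ; apply: card_imset_kernel => x y _ _.
by rewrite !eq_connect_class // aut_connect_facerel.
Qed.

Section Map.

Variables (F : finType) (P : fmap F).
Hypothesis mapP : is_map P.

Lemma r0K : involutive (r0 P). Proof. by case: mapP. Qed.
Lemma r1K : involutive (r1 P). Proof. by case: mapP => _ []. Qed.
Lemma r2K : involutive (r2 P). Proof. by case: mapP => _ [_ []]. Qed.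
Lemma r0_neq x : r0 P x != x. Proof. by case: mapP => _ [_ [_ []]]. Qed.
Lemma r1_neq x : r1 P x != x. Proof. by case: mapP => _ [_ [_ [_ []]]]. Qed.
Lemma r2_neq x : r2 P x != x. Proof. by case: mapP => _ [_ [_ [_ [_ []]]]]. Qed.
Lemma r02C x : r0 P (r2 P x) = r2 P (r0 P x).
Proof. by case: mapP => _ [_ [_ [_ [_ [_ []]]]]]. Qed.
Lemma r02_neq x : r0 P (r2 P x) != x.
Proof. by case: mapP => _ [_ [_ [_ [_ [_ [_ []]]]]]]. Qed.
Lemma flag_connect x y : connect (flag_rel P) x y.
Proof. by case: mapP => _ [_ [_ [_ [_ [_ [_ [_ ]]]]]]]. Qed.

Lemma flag_rel_sym : symmetric (flag_rel P).
Proof.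
by move=> x y; rewrite /flag_rel ![y == _]eq_sym !(inv_eq r0K, inv_eq r1K, inv_eq r2K).
Qed.
Lemma vrel_sym : symmetric (vrel P).
Proof. by move=> x y; rewrite /vrel ![y == _]eq_sym !(inv_eq r1K, inv_eq r2K). Qed.
Lemma erel_sym : symmetric (erel P).
Proof. by move=> x y; rewrite /erel ![y == _]eq_sym !(inv_eq r0K, inv_eq r2K). Qed.
Lemma facerel_sym : symmetric (facerel P).
Proof. by move=> x y; rewrite /facerel ![y == _]eq_sym !(inv_eq r0K, inv_eq r1K). Qed.

Lemma eclassE x : eclass P x =i [:: x; r0 P x; r2 P x; r0 P (r2 P x)].
Proof.
set s := [:: _; _; _; _]; have erel_csym := sym_connect_sym erel_sym.
have s_closed : closed (erel P) [in s].
  apply: (intro_closed (a := [in s]) erel_csym) => u v.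
  by case/orP=> /eqP-> /[!inE] /or4P[]/eqP->; rewrite ?r0K ?r2K -?r02C ?r0K ?r2K ?eqxx ?orbT.
move=> y; rewrite /eclass inE; apply/idP/idP => [/(closed_connect s_closed) <-|].
  exact: mem_head.
have e0 z : connect (erel P) z (r0 P z) by apply: connect1; rewrite /erel eqxx.
have e2 z : connect (erel P) z (r2 P z) by apply: connect1; rewrite /erel eqxx orbT.
by rewrite !inE => /or4P[]/eqP-> //; last exact: connect_trans (e2 x) (e0 _).
Qed.

Lemma card_eclass x : #|eclass P x| = 4.
Proof.
rewrite (eq_card (eclassE x)); apply/card_uniqP/klein_orbit_uniq => //.
- exact: r0K.
- exact: r0_neq.
- exact: r2_neq.
- exact: r02_neq.
Qed.

Lemma card_flags : #|F| = 4 * #|Eset P|.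
Proof.
rewrite (card_closed_classes (A := F) erel_sym) // mulnC -sum_nat_const.
by apply: eq_bigr => _ /imsetP[x _ ->]; exact: card_eclass.
Qed.

Lemma vclass_vrel x y : vrel P x y -> vclass P x = vclass P y.
Proof. by move=> xy; apply/eqP; rewrite eq_connect_class ?connect1 //; exact: vrel_sym. Qed.

Lemma vclass_r1 x : vclass P (r1 P x) = vclass P x.
Proof. by symmetry; apply: vclass_vrel; rewrite /vrel eqxx. Qed.

Lemma vclass_r2 x : vclass P (r2 P x) = vclass P x.
Proof. by symmetry; apply: vclass_vrel; rewrite /vrel eqxx orbT. Qed.

Lemma card_Vset_single_edge x :
  r1 P x = r2 P x -> r0 P (r1 P x) = r1 P (r0 P x) -> #|Vset P| <= 2.
Proof.
move=> r12 r01C; set s := [:: x; r0 P x; r2 P x; r0 P (r2 P x)].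
have s_closed : closed (flag_rel P) [in s].
  apply: (intro_closed (a := [in s]) (sym_connect_sym flag_rel_sym)) => u v.
  have e2 : r1 P (r0 P x) = r0 P (r2 P x) by rewrite -r01C r12.
  have e3 : r1 P (r2 P x) = x by rewrite -r12 r1K.
  have e4 : r1 P (r0 P (r2 P x)) = r0 P x by rewrite -e2 r1K.
  case/or3P=> /eqP-> /[!inE] /or4P[]/eqP->;
  by rewrite ?r12 ?e2 ?e3 ?e4 ?r0K ?r2K -?r02C ?r0K ?r2K ?eqxx ?orbT.
have {}s_closed y : y \in s.
  by rewrite -(closed_connect s_closed (flag_connect x y)) mem_head.
have : Vset P \subset [set vclass P x; vclass P (r0 P x)].
  apply/subsetP=> _ /imsetP[y _ ->]; move: (s_closed y); rewrite !inE.
  by case/or4P=> /eqP->; rewrite ?vclass_r2 ?r02C ?vclass_r2 eqxx ?orbT.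
by move/subset_leq_card/leq_trans; apply; rewrite cards2 ltnS leq_b1.
Qed.

Lemma orientable_r1_neq_r02 : orientable P -> forall x, r1 P x != r0 P (r2 P x).
Proof.
case=> c c_alt x; apply/eqP=> r1E; have [_ c1 _] := c_alt x.
have [c0 _ _] := c_alt (r2 P x); have [_ _ c2] := c_alt x.
by move: c1; rewrite r1E c0 c2 negbK; case: (c x).
Qed.

Lemma tr0K : involutive (tr0 P).
Proof. by case=> x i; case: (ord3P i) => -> /=; rewrite ?r0K ?r1K. Qed.
Lemma tr1K : involutive (tr1 P).
Proof. by case=> x i; case: (ord3P i) => -> /=; rewrite ?r2K. Qed.

Lemma facerel_trunc_sym : symmetric (facerel (trunc P)).
Proof. by move=> x y; rewrite /facerel ![y == _]eq_sym !(inv_eq tr0K, inv_eq tr1K). Qed.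

Definition vface_flag (z : F * 'I_3) : bool := z.2 == i2.

Lemma vface_flag_tr0 z : vface_flag (tr0 P z) = vface_flag z.
Proof. by case: z => x i; case: (ord3P i) => ->. Qed.
Lemma vface_flag_tr1 z : vface_flag (tr1 P z) = vface_flag z.
Proof. by case: z => x i; case: (ord3P i) => ->. Qed.

(* z, tr2 z and tr2 (tr1 z) lie on the three faces around the vertex of z. *)
Lemma vface_flag_vertex z :
  vface_flag z + vface_flag (tr2 P z) + vface_flag (tr2 P (tr1 P z)) = 1.
Proof. by case: z => x i; case: (ord3P i) => ->. Qed.

Lemma connect_vrel_trunc x y :
  connect (vrel P) x y = connect (facerel (trunc P)) (x, i2) (y, i2).
Proof.
apply/idP/idP.
  apply: (connect_homo_in (f := fun u => (u, i2)) (I := predT)) => // u v _.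
  by case/orP=> /eqP->; split=> //; apply: connect1; rewrite /facerel /= eqxx ?orbT.
move=> xy; apply: (connect_homo_in (f := fst) (I := vface_flag) _ _ xy) => //.
move=> [u i] v /eqP /= ->.
by case/orP=> /eqP-> /=; split=> //; apply: connect1; rewrite /vrel eqxx ?orbT.
Qed.

Lemma connect_facerel_trunc x y :
  connect (facerel P) x y = connect (facerel (trunc P)) (x, i0) (y, i0).
Proof.
have t0 z : connect (facerel (trunc P)) z (tr0 P z).
  by apply: connect1; rewrite /facerel eqxx.
have t1 z : connect (facerel (trunc P)) z (tr1 P z).
  by apply: connect1; rewrite /facerel eqxx orbT.
apply/idP/idP.
  apply: (connect_homo_in (f := fun u => (u, i0)) (I := predT)) => // u v _.
  case/orP=> /eqP-> /=; split=> //.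
  exact: connect_trans (t1 (u, i0)) (connect_trans (t0 (u, i1)) (t1 (r1 P u, i1))).
move=> xy; apply: (connect_homo_in (f := fst) (I := predC vface_flag) _ _ xy) => //.
move=> [u i] v /=; case: (ord3P i) => -> //= _;
by case/orP=> /eqP-> /=; split=> //; apply: connect1; rewrite /facerel eqxx ?orbT.
Qed.

Lemma fclass_trunc_tr1 z : fclass (trunc P) (tr1 P z) = fclass (trunc P) z.
Proof.
apply/eqP; rewrite eq_sym eq_connect_class; last exact: facerel_trunc_sym.
by apply: connect1; rewrite /facerel eqxx orbT.
Qed.

Lemma card_Vset_trunc : #|Vset P| = #|[set fclass (trunc P) (x, i2) | x in F]|.
Proof.
have [symV symT] := (vrel_sym, facerel_trunc_sym).
by apply: card_imset_kernel => x y _ _; rewrite !eq_connect_class // connect_vrel_trunc.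
Qed.

Lemma card_fclass_trunc (A : {set F}) :
  #|[set fclass (trunc P) (y, i0) | y in A]| = #|fclass P @: A|.
Proof.
have [symF symT] := (facerel_sym, facerel_trunc_sym).
by apply: card_imset_kernel => x y _ _; rewrite !eq_connect_class // connect_facerel_trunc.
Qed.

Lemma trunc_fun_inj (g : {perm F}) : injective (fun z : F * 'I_3 => (g z.1, z.2)).
Proof. by move=> [x i] [y j] /= [/perm_inj-> ->]. Qed.

Definition trunc_perm (g : {perm F}) : {perm F * 'I_3} := perm (@trunc_fun_inj g).

Lemma trunc_permE g x i : trunc_perm g (x, i) = (g x, i).
Proof. by rewrite permE. Qed.

Lemma trunc_perm_inj : injective trunc_perm.
Proof.
move=> g g' /permP eq_g; apply/permP=> x.
by have := eq_g (x, i0); rewrite !trunc_permE => -[].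
Qed.

Lemma trunc_perm_aut g : g \in aut_set P -> trunc_perm g \in aut_set (trunc P).
Proof.
case/aut_setP=> g0 g1 g2; apply/aut_setP.
by split=> -[x i]; case: (ord3P i) => -> /=; rewrite !trunc_permE /= ?g0 ?g1 ?g2.
Qed.

Section Polyhedron.

Hypotheses (simpleP : simple_graph P) (V4 : 4 <= #|Vset P|) (orientP : orientable P).

Lemma r0_neq_r1 x : r0 P x != r1 P x.
Proof.
apply/eqP=> r01; case: simpleP => no_loop _; move: (no_loop x).
by rewrite r01 vclass_r1 eqxx.
Qed.

Lemma r01_neq_r10 x : r0 P (r1 P x) != r1 P (r0 P x).
Proof.
apply/eqP=> r01C; case: simpleP => _ /(_ x (r1 P x)) no_multi.
have eq_e : eclass P x = eclass P (r1 P x).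
  by apply: no_multi; rewrite ?r01C vclass_r1.
have : r1 P x \in eclass P x by rewrite eq_e inE connect0.
rewrite eclassE !inE => /or4P[]/eqP r1E.
- by move: (r1_neq x); rewrite r1E eqxx.
- by move: (r0_neq_r1 x); rewrite r1E eqxx.
- by have := leq_trans V4 (card_Vset_single_edge r1E r01C).
- by move: (orientable_r1_neq_r02 orientP x); rewrite r1E eqxx.
Qed.

Lemma card_fclass_ge6 x : 6 <= #|fclass P x|.
Proof.
move: (dihedral_orbit_uniq r0K r1K r0_neq r1_neq r0_neq_r1 r01_neq_r10 x).
move=> /card_uniqP /= <-.
have f0 z : connect (facerel P) z (r0 P z) by apply: connect1; rewrite /facerel eqxx.
have f1 z : connect (facerel P) z (r1 P z).
  by apply: connect1; rewrite /facerel eqxx orbT.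
apply/subset_leq_card/subsetP=> y; rewrite !inE.
case/or4P=> [||| /or3P[]] /eqP->.
- exact: connect0.
- exact: f0.
- exact: f1.
- exact: connect_trans (f1 x) (f0 _).
- exact: connect_trans (f0 x) (f1 _).
- exact: connect_trans (connect_trans (f0 x) (f1 _)) (f0 _).
Qed.

Lemma card_closed_fclass_leq (A : {set F}) :
  closed (facerel P) A -> 6 * #|fclass P @: A| <= #|A|.
Proof.
move=> A_closed; rewrite [X in _ <= X](card_closed_classes facerel_sym A_closed).
rewrite mulnC -sum_nat_const; apply: leq_sum => _ /imsetP[x _ ->].
exact: card_fclass_ge6.
Qed.

Lemma bicolored_faces_card (B : {set F}) :
  closed (facerel P) B -> (forall y, (r2 P y \in B) = (y \notin B)) ->
  #|Fset P| + #|fclass P @: B| <= #|Eset P|.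
Proof.
move=> B_closed r2B.
(* B and ~: B both have 2E flags, and every face has at least 6 flags. *)
have CB_closed : closed (facerel P) (~: B).
  by move=> x y /B_closed; rewrite !inE => ->.
have card_CB : #|~: B| = #|B|.
  have -> : ~: B = r2 P @: B.
    apply/setP=> y; rewrite inE; apply/idP/imsetP=> [yNB | [z zB ->]].
      by exists (r2 P y); rewrite ?r2B ?r2K.
    by rewrite r2B negbK.
  exact/card_imset/(can_inj r2K).
have : #|Fset P| = #|fclass P @: B| + #|fclass P @: ~: B|.
  exact: card_classes_split facerel_sym B_closed.
have := card_closed_fclass_leq B_closed; have := card_closed_fclass_leq CB_closed.
have := cardsC B; rewrite card_flags card_CB; lia.
Qed.

Section Automorphism.

Hypothesis eulerP : #|Vset P| + #|Fset P| = #|Eset P| + 2.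
Variable h : {perm F * 'I_3}.
Hypothesis hA : h \in aut_set (trunc P).

Let h_tr0 z : h (tr0 P z) = tr0 P (h z). Proof. by case/aut_setP: hA => + _ _; apply. Qed.
Let h_tr1 z : h (tr1 P z) = tr1 P (h z). Proof. by case/aut_setP: hA => _ + _; apply. Qed.
Let h_tr2 z : h (tr2 P z) = tr2 P (h z). Proof. by case/aut_setP: hA => _ _ +; apply. Qed.

Let to_vface z := vface_flag (h z).

Lemma to_vface_connect z w :
  connect (facerel (trunc P)) z w -> to_vface z = to_vface w.
Proof.
apply: (closed_connect (a := [pred u | to_vface u])) => u v.
by case/orP=> /eqP-> /[!inE]; rewrite /to_vface ?h_tr0 ?h_tr1 ?vface_flag_tr0 ?vface_flag_tr1.
Qed.

Lemma to_vface_i1 y : to_vface (y, i1) = to_vface (y, i0).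
Proof. by symmetry; apply/to_vface_connect/connect1; rewrite /facerel eqxx orbT. Qed.

Lemma to_vface_vertex y :
  to_vface (y, i0) + to_vface (y, i2) + to_vface (r2 P y, i0) = 1.
Proof.
have := vface_flag_vertex (h (y, i1)); rewrite -h_tr1 -!h_tr2.
by rewrite -[vface_flag (h (y, i1))]/(to_vface (y, i1)) to_vface_i1.
Qed.

Lemma to_vface_i2_const x y : to_vface (x, i2) = to_vface (y, i2).
Proof.
have cl : closed (flag_rel P) [pred u | to_vface (u, i2)].
  move=> u v /or3P[]/eqP-> /[!inE]; last 2 first.
  - by apply/to_vface_connect/connect1; rewrite /facerel eqxx.
  - by apply/to_vface_connect/connect1; rewrite /facerel eqxx orbT.
  have := to_vface_vertex u; have := to_vface_vertex (r0 P u).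
  have -> : to_vface (r0 P u, i0) = to_vface (u, i0).
    by symmetry; apply/to_vface_connect/connect1; rewrite /facerel eqxx.
  have -> : to_vface (r2 P (r0 P u), i0) = to_vface (r2 P u, i0).
    by rewrite -r02C; symmetry; apply/to_vface_connect/connect1; rewrite /facerel eqxx.
  lia.
by have := closed_connect cl (flag_connect x y); rewrite !inE.
Qed.

Lemma to_vface_i2 x : to_vface (x, i2).
Proof.
apply: contraT => /negbTE nx.
have nv y : to_vface (y, i2) = false by rewrite (to_vface_i2_const y x).
pose B := [set y | to_vface (y, i0)].
have B_closed : closed (facerel P) B.
  move=> u v uv; rewrite !inE; apply: to_vface_connect.
  by rewrite -connect_facerel_trunc connect1.
have r2B y : (r2 P y \in B) = (y \notin B).
  by have := to_vface_vertex y; rewrite nv !inE; case: to_vface; case: to_vface.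
have VB : [set fclass (trunc P) (x, i2) | x in F] =
          [set fclass (trunc P) (h (y, i0)) | y in B].
  apply/setP=> C; apply/imsetP/imsetP=> [[z _ ->] | [y yB ->]].
    have : h (h^-1%g (z, i2)) = (z, i2) by rewrite permKV.
    case: (h^-1%g _) => y i hy; have to_y : to_vface (y, i) by rewrite /to_vface hy.
    case: (ord3P i) hy to_y => -> hy to_y; last by rewrite nv in to_y.
      by exists y; rewrite ?inE // hy.
    exists y; first by rewrite inE -to_vface_i1.
    by rewrite -[(y, i0)]/(tr1 P (y, i1)) h_tr1 fclass_trunc_tr1 hy.
  move: yB; rewrite inE /to_vface; case: (h (y, i0)) => a j /eqP /= ->.
  by exists a.
have := bicolored_faces_card B_closed r2B.
rewrite -card_fclass_trunc -(card_fclass_aut (fun y => (y, i0)) _ facerel_trunc_sym hA).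
rewrite -VB -card_Vset_trunc; lia.
Qed.

Lemma aut_trunc_perm : exists2 g, g \in aut_set P & h = trunc_perm g.
Proof.
pose g x := (h (x, i2)).1.
have hE x i : h (x, i) = (g x, i).
  have h2 y : h (y, i2) = (g y, i2).
    by move: (to_vface_i2 y); rewrite /to_vface /g; case: (h (y, i2)) => a j /eqP /= ->.
  case: (ord3P i) => ->; last exact: h2.
    by rewrite -[(x, i0)]/(tr1 P (tr2 P (x, i2))) h_tr1 h_tr2 h2.
  by rewrite -[(x, i1)]/(tr2 P (x, i2)) h_tr2 h2.
have g_inj : injective g.
  by move=> x y eq_g; have := hE y i0; rewrite -eq_g -hE => /perm_inj[].
exists (perm g_inj); last by apply/permP=> -[x i]; rewrite trunc_permE permE hE.
apply/aut_setP; split=> x; rewrite !permE.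
- by have := h_tr0 (x, i0); rewrite /= !hE => -[].
- by have := h_tr0 (x, i1); rewrite /= !hE => -[].
- by have := h_tr2 (x, i0); rewrite /= !hE => -[].
Qed.

End Automorphism.

End Polyhedron.

End Map.

Theorem lemma8 (F : finType) (P : fmap F)
  (hmap : is_map P) (hpoly : polyhedral P) (hgenus : genus0 P) :
  (forall h : {perm (F * 'I_3)}, h \in aut_set (trunc P) ->
     exists2 g : {perm F}, g \in aut_set P & forall x i, h (x, i) = (g x, i))
  /\ #|aut_set (trunc P)| = #|aut_set P|.
Proof.
have [simpleP [[V4 _] _]] := hpoly; have [orientP eulerP] := hgenus.
have autE : aut_set (trunc P) = [set trunc_perm g | g in aut_set P].
  apply/setP=> h; apply/idP/imsetP=> [hA | [g gA ->]]; last exact: trunc_perm_aut.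
  by have [g gA ->] := aut_trunc_perm hmap simpleP V4 orientP eulerP hA; exists g.
split; last by rewrite autE card_imset //; exact: trunc_perm_inj.
by move=> h; rewrite autE => /imsetP[g gA ->]; exists g => // x i; exact: trunc_permE.
Qed.
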